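(* Let $D$ be a locatable digraph of order $n$ with $\gamma_{OL}(D)=n$. Then $\mathcal{H}(D)$ is a disjoint union of rooted directed trees, such that for each root $r$ of one of these trees, $f^-(r)$ is domination-forced in $D$ (and thus $r$ has only one in-neighbour in $D$), and for each other vertex $v$, $f^-(v)$ is location-forced in $D$ (and $v$ has an in-neighbour in $\mathcal{H}(D)$).
   Context: Digraphs are finite and may contain loops; between two distinct vertices there may be arcs in one or both directions, no repeated arcs. $N^-(v)=\{u: uv\text{ is an arc}\}$ (contains $v$ iff $v$ has a loop). An OLD set of $D$ is a set $S\subseteq V(D)$ such that every vertex has an in-neighbour in $S$ and for every two distinct vertices $u,w$ some vertex of $S$ lies in exactly one of $N^-(u),N^-(w)$. $D$ is locatable if it has an OLD set, and then $\gamma_{OL}(D)$ is the minimum size of an OLD set. A vertex $v$ is domination-forced if some vertex $w$ has $N^-(w)=\{v\}$; it is location-forced if there are distinct vertices $x,y$ with $N^-(x)\ominus N^-(y)=\{v\}$ ($\ominus$ = symmetric difference). An arc $xy$ (possibly a loop) is forcing if $N^-(y)=\{x\}$ or there is a vertex $z$ with $N^-(z)=N^-(y)\setminus\{x\}$. In a locatable digraph $D$ of order $n$ with $\gamma_{OL}(D)=n$, every vertex $v$ is the head of exactly one forcing arc; $f^-(v)$ denotes its tail (so $f^-(v)=v$ if $v$ has a forcing loop). $\mathcal{H}(D)$ is the digraph on vertex set $V(D)$ with an arc from $x$ to $y$ if and only if there exists a location-forced vertex $v$ of $D$ with $N^-(x)=N^-(y)\setminus\{v\}$. A rooted directed tree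 is a digraph without loops and directed 2-cycles whose underlying undirected graph is a tree, with a single source (the root) and every arc oriented away from the root; a single vertex is allowed. *)

From mathcomp Require Import all_boot.
Set Implicit Arguments. Unset Strict Implicit. Unset Printing Implicit Defensive.

(* A digraph is a finite vertex type V with an arc relation [arc : rel V];
   [arc u v] means uv is an arc. Loops allowed (arc v v), no multi-arcs. *)
Section Digraphs.
Variables (V : finType) (arc : rel V).

Definition Nin (v : V) : {set V} := [set u | arc u v].

Definition symdiff (A B : {set V}) : {set V} := (A :\: B) :|: (B :\: A).

Definition is_OLD (S : {set V}) : bool :=
  [forall v, [exists u in S, u \in Nin v]] &&
  [forall u, forall w, (u != w) ==> [exists s in S, (s \in Nin u) != (s \in Nin w)]].

Definition locatable : Prop := exists S, is_OLD S.

(* minimum size of an OLD set (meaningful when locatable) *)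
Definition gamma_OL : nat := \big[minn/#|V|]_(S : {set V} | is_OLD S) #|S|.

Definition dom_forced (v : V) : bool := [exists w, Nin w == [set v]].

Definition loc_forced (v : V) : bool :=
  [exists x, exists y, (x != y) && (symdiff (Nin x) (Nin y) == [set v])].

Definition forcing (x y : V) : bool :=
  arc x y && ((Nin y == [set x]) || [exists z, Nin z == Nin y :\ x]).

(* f^-(v): the tail of the (unique, when gamma_OL = n) forcing arc with head v *)
Definition fminus (v : V) : V := odflt v [pick x | forcing x v].

Definition Harc (x y : V) : bool :=
  [exists v, [&& loc_forced v, v \in Nin y & Nin x == Nin y :\ v]].

End Digraphs.

Section Trees.
Variables (V : finType) (h : rel V).

Definition uadj : rel V := fun a b => (a != b) && (h a b || h b a).

Definition wcomp (x : V) : {set V} := [set y | connect (fun a b => h a b || h b a) x y].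

Definition rooted_dtree (C : {set V}) (r : V) : Prop :=
  r \in C /\
  (forall x, x \in C -> ~~ h x x) /\
  (forall x y, x \in C -> y \in C -> ~~ (h x y && h y x)) /\
  (forall x y, x \in C -> y \in C ->
      connect (fun a b => [&& a \in C, b \in C & uadj a b]) x y) /\
  (~ exists p : seq V, [/\ uniq p, 3 <= size p, all (mem C) p & cycle uadj p]) /\
  (forall s, s \in C -> ((forall x, x \in C -> ~~ h x s) <-> s = r)) /\
  (forall v, v \in C -> connect (fun a b => [&& a \in C, b \in C & h a b]) r v).

Definition forest_of_rooted_trees : Prop :=
  forall x, exists r, rooted_dtree (wcomp x) r.

End Trees.

From mathcomp Require Import all_boot.
Set Implicit Arguments. Unset Strict Implicit. Unset Printing Implicit Defensive.

(* If gamma_OL(D) = n, deleting any vertex x from V destroys the OLD property, so x is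
   domination- or location-forced, i.e. x is the tail of a forcing arc xy.  Such an arc makes x
   removable from N^-(y) within the family of the n + 1 sets N^-(v) and the empty set, in which
   every vertex is removable from some member.  In such a family no member has two removable
   elements: deleting a third vertex z from every member merges some member with itself minus z,
   so the family shrinks together with the ground set and one can induct.  Hence every vertex is
   the head of exactly one forcing arc, and an arc xy of H(D), for which
   N^-(x) = N^-(y) \ f^-(y), is determined by y and increases |N^-|.  A relation graded in this
   way with in-degree at most one is a disjoint union of rooted trees whose roots are its
   sources. *)

Lemma connect_split_last (T : finType) (e : rel T) a v :
  connect e a v -> a = v \/ exists2 p, connect e a p & e p v.
Proof.
case/connectP => p; elim/last_ind: p => [|p w _] /=; first by move=> _ ->; left.
rewrite rcons_path last_rcons => /andP[pp ew] ->; right; exists (last a p) => //.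
by apply/connectP; exists p.
Qed.

Lemma connect_restrict (T : finType) (e : rel T) (C : {set T}) a b :
  (forall x y, x \in C -> e x y -> y \in C) -> a \in C -> connect e a b ->
  connect (fun x y => [&& x \in C, y \in C & e x y]) a b.
Proof.
move=> closedC aC /connectP[p + ->]; elim: p a aC => [|c p IH] a aC //= /andP[eac pc].
have cC := closedC a c aC eac.
by apply: connect_trans (IH c cC pc); apply: connect1; rewrite aC cC eac.
Qed.

Section GradedInForest.
Variables (T : finType) (h : rel T) (rank : T -> nat).
Hypothesis rank_lt : forall x y, h x y -> rank x < rank y.
Hypothesis in_uniq : forall a b y, h a y -> h b y -> a = b.

Definition source r := [forall y, ~~ h y r].

Lemma exists_source v : exists2 r, source r & connect h r v.
Proof.
have [n] := ubnP (rank v); elim: n v => // n IH v /ltnSE le_vn.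
have [src_v|/forallPn[y /negPn hyv]] := boolP (source v); first by exists v.
have [|r src_r cry] := IH y; first exact: leq_trans (rank_lt hyv) le_vn.
by exists r => //; apply: connect_trans cry (connect1 hyv).
Qed.

Lemma source_connect_uniq a b v :
  source a -> source b -> connect h a v -> connect h b v -> a = b.
Proof.
have [n] := ubnP (rank v); elim: n a b v => // n IH a b v /ltnSE le_vn src_a src_b.
case/connect_split_last => [eav|[p cap hpv]]; case/connect_split_last => [ebv|[q cbq hqv]].
- by rewrite eav ebv.
- by have := forallP src_a q; rewrite eav hqv.
- by have := forallP src_b p; rewrite ebv hpv.
- move: cbq; rewrite -(in_uniq hpv hqv) => cbp.
  exact: IH (leq_trans (rank_lt hpv) le_vn) src_a src_b cap cbp.
Qed.

Definition root v := odflt v [pick r | source r && connect h r v].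

Lemma rootP v : source (root v) /\ connect h (root v) v.
Proof.
rewrite /root; case: pickP => [r /andP[] //|none].
by have [r src_r crv] := exists_source v; have := none r; rewrite src_r crv.
Qed.

Lemma root_uniq r v : source r -> connect h r v -> root v = r.
Proof.
move=> src_r crv; have [src_root croot] := rootP v.
exact: source_connect_uniq src_root src_r croot crv.
Qed.

Lemma root_wcomp x y : y \in wcomp h x -> root y = root x.
Proof.
rewrite inE => /connectP[p + ->]; elim: p x => [|z p IH] x //= /andP[hxz pz].
rewrite IH //; case/orP: hxz => [hxz|hzx].
- have [src_x cx] := rootP x.
  exact: root_uniq src_x (connect_trans cx (connect1 hxz)).
- have [src_z cz] := rootP z.
  exact/esym/(root_uniq src_z)/(connect_trans cz (connect1 hzx)).
Qed.

Lemma wcomp_closed x y z : y \in wcomp h x -> h y z || h z y -> z \in wcomp h x.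
Proof. by rewrite !inE => cxy hyz; apply: connect_trans cxy (connect1 _). Qed.

Lemma root_in_wcomp x : root x \in wcomp h x.
Proof.
have [_ crx] := rootP x; rewrite inE sym_connect_sym => [|a b]; last by rewrite orbC.
by apply: connect_sub crx => a b hab; apply: connect1; rewrite hab.
Qed.

Lemma connect_root_wcomp x y : y \in wcomp h x ->
  connect (fun a b => [&& a \in wcomp h x, b \in wcomp h x & h a b]) (root x) y.
Proof.
move=> yC; have rC := root_in_wcomp x; rewrite -(root_wcomp yC) in rC *.
apply: connect_restrict rC (rootP y).2 => a b aC hab.
by apply: wcomp_closed aC _; rewrite hab.
Qed.

Lemma no_loop x : ~~ h x x.
Proof. by apply/negP => /rank_lt; rewrite ltnn. Qed.

Lemma no_2cycle x y : ~~ (h x y && h y x).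
Proof.
by apply/negP => /andP[/rank_lt lt_xy /rank_lt lt_yx]; have := ltn_trans lt_xy lt_yx; rewrite ltnn.
Qed.

Lemma no_uadj_cycle p : uniq p -> 2 < size p -> ~~ cycle (uadj h) p.
Proof.
case: p => [|x0 p0] // uniq_p size_p; set p := x0 :: p0.
have [m mp max_m] := @arg_maxnP _ x0 (mem p) rank (mem_head x0 p0).
have [i q rot_m] := rot_to mp.
rewrite -(rot_cycle i) rot_m; apply/negP.
have le_m v : v \in m :: q -> rank v <= rank m by rewrite -rot_m mem_rot => /max_m.
have : uniq (m :: q) by rewrite -rot_m rot_uniq.
have : 2 < size (m :: q) by rewrite -rot_m size_rot.
case: q le_m {rot_m} => [|a [|c q]] //= le_m _ /andP[_ /andP[aNq _]].
rewrite rcons_path => /and4P[/andP[_ uadj_ma] _ _ /andP[_ uadj_bm]].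
set b := last c q in uadj_bm.
have bq : b \in [:: m, a, c & q] by rewrite 2!in_cons /b mem_last !orbT.
have aq : a \in [:: m, a, c & q] by rewrite !inE eqxx orbT.
have [hma|ham] := orP uadj_ma; first by have := le_m a aq; rewrite leqNgt rank_lt.
have [hbm|hmb] := orP uadj_bm; last by have := le_m b bq; rewrite leqNgt rank_lt.
by move: aNq; rewrite (in_uniq ham hbm) /b mem_last.
Qed.

Lemma rooted_dtree_root x : rooted_dtree h (wcomp h x) (root x).
Proof.
set C := wcomp h x.
have reach_root := @connect_root_wcomp x.
have ureach_root y : y \in C ->
    connect (fun a b => [&& a \in C, b \in C & uadj h a b]) (root x) y.
  move=> yC; apply: connect_sub (reach_root y yC) => a b /and3P[aC bC hab].
  apply: connect1; rewrite aC bC /uadj hab andbT.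
  by apply: contraTneq hab => ->; apply: no_loop.
have usym : symmetric (fun a b => [&& a \in C, b \in C & uadj h a b]).
  by move=> a b; rewrite /uadj eq_sym orbC; case: (a \in C); case: (b \in C).
split; first exact: root_in_wcomp.
split; first by move=> y _; apply: no_loop.
split; first by move=> y z _ _; apply: no_2cycle.
split.
  move=> y z yC zC; apply: connect_trans (ureach_root z zC).
  by rewrite sym_connect_sym //; apply: ureach_root.
split; first by case=> p [uniq_p size_p _]; apply/negP/no_uadj_cycle.
split=> // s sC; split=> [noin_s|->]; last by move=> y _; apply: (forallP (rootP x).1).
have src_s : source s.
  apply/forallP => y; apply/negP => hys.
  have yC : y \in C by apply: wcomp_closed sC _; rewrite hys orbT.
  by have := noin_s y yC; rewrite hys.
by rewrite -(root_wcomp sC); symmetry; apply: root_uniq src_s (connect0 _ _).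
Qed.

Lemma graded_forest_of_rooted_trees : forest_of_rooted_trees h.
Proof. by move=> x; exists (root x); apply: rooted_dtree_root. Qed.

Lemma rooted_dtree_wcompP v : rooted_dtree h (wcomp h v) v <-> source v.
Proof.
have vC : v \in wcomp h v by rewrite inE connect0.
split=> [[_ [_ [_ [_ [_ [src_C _]]]]]]|src_v].
  apply/forallP => y; apply/negP => hyv.
  have yC : y \in wcomp h v by apply: wcomp_closed vC _; rewrite hyv orbT.
  by have := (src_C v vC).2 erefl y yC; rewrite hyv.
by rewrite -{2}(root_uniq src_v (connect0 _ v)); apply: rooted_dtree_root.
Qed.

End GradedInForest.

Section Removable.
Variable T : finType.
Implicit Types (F : {set {set T}}) (A B X : {set T}).

Definition removable F A x := [&& A \in F, x \in A & A :\ x \in F].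

Lemma removable_setD1 F A y z : y != z -> removable F A y ->
  removable [set B :\ z | B in F] (A :\ z) y.
Proof.
move=> yz /and3P[AF yA AyF].
have imF B : B \in F -> B :\ z \in [set B :\ z | B in F] by move=> BF; apply/imsetP; exists B.
by rewrite /removable imF //= !inE yz yA setDDl setUC -setDDl imF.
Qed.

Lemma card_setD1_imset_lt F A z : removable F A z -> #|[set B :\ z | B in F]| < #|F|.
Proof.
case/and3P=> AF zA AzF; rewrite ltn_neqAle leq_imset_card andbT.
apply: contraL zA => /imset_injP inj_z; rewrite (inj_z A (A :\ z)) ?setD11 //.
by rewrite setDDl setUid.
Qed.

Lemma removable_uniq F X : set0 \in F -> {in X, forall x, exists A, removable F A x} ->
  #|F| <= #|X|.+1 -> forall A x1 x2, removable F A x1 -> removable F A x2 -> x1 = x2.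
Proof.
have [n] := ubnP #|X|; elim: n X F => // n IH X F /ltnSE le_Xn F0 remX le_FX A x1 x2 r1 r2.
apply/eqP/negP => /negP x12.
have [sub_X|/subsetPn[z zX zNx12]] := boolP (X \subset [set x1; x2]); last first.
  have [z1 z2] : z != x1 /\ z != x2 by move: zNx12; rewrite !inE negb_or => /andP.
  have [Az rem_Az] := remX z zX.
  move/eqP: x12; apply; apply: (IH (X :\ z) [set B :\ z | B in F] _ _ _ _ (A :\ z) x1 x2).
  - by move: le_Xn; rewrite (cardsD1 z X) zX.
  - by apply/imsetP; exists set0; rewrite ?set0D.
  - move=> y; rewrite !inE => /andP[yz yX]; have [B rem_By] := remX y yX.
    by exists (B :\ z); apply: removable_setD1.
  - have := card_setD1_imset_lt rem_Az; move: le_FX; rewrite (cardsD1 z X) zX.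
    by move=> le_F lt_Fz; rewrite -ltnS (leq_trans lt_Fz le_F).
  - by apply: removable_setD1; rewrite // eq_sym.
  - by apply: removable_setD1; rewrite // eq_sym.
move: r1 r2 => /and3P[AF x1A A1F] /and3P[_ x2A A2F].
(* A, A :\ x2, A :\ x1 and set0 have the four distinct traces on {x1, x2}. *)
have : [set: bool * bool] \subset [set (x1 \in B, x2 \in B) | B : {set T} in F].
  apply/subsetP => -[[] []] _; apply/imsetP.
  - by exists A; rewrite ?x1A ?x2A.
  - by exists (A :\ x2); rewrite // !inE eqxx x1A andbT x12.
  - by exists (A :\ x1); rewrite // !inE eqxx x2A andbT eq_sym x12.
  - by exists set0; rewrite ?inE.
move/subset_leq_card; rewrite cardsT card_prod card_bool => le4.
have le_X2 : #|X| <= 2 by have := subset_leq_card sub_X; rewrite cards2 x12.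
have := leq_trans le4 (leq_trans (leq_imset_card _ _) le_FX).
by rewrite ltnS => /leq_trans/(_ le_X2).
Qed.

End Removable.

Section Symdiff.
Variable T : finType.
Implicit Types A B : {set T}.

Lemma exists_setC1 A x :
  A != set0 -> A != [set x] -> [exists u in [set~ x], u \in A].
Proof.
move=> A0 Ax; have : A :\ x != set0 by rewrite setD_eq0 subset1 negb_or Ax.
by case/set0Pn => u; rewrite !inE => /andP[ux uA]; apply/existsP; exists u; rewrite !inE ux.
Qed.

Lemma mem_symdiff A B s : (s \in symdiff A B) = ((s \in A) != (s \in B)).
Proof. by rewrite !inE; case: (s \in A); case: (s \in B). Qed.

Lemma symdiff_setD1 A x : x \in A -> symdiff (A :\ x) A = [set x].
Proof.
move=> xA; apply/setP => t; rewrite mem_symdiff !inE.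
by case: (eqVneq t x) => [->|]; rewrite ?xA //; case: (t \in A).
Qed.

Lemma setD1_symdiff A B x : symdiff A B = [set x] -> x \in A -> B = A :\ x.
Proof.
move=> /setP AB xA; apply/setP => t; have := AB t; rewrite mem_symdiff !inE.
case: (eqVneq t x) => [->|_]; rewrite ?xA; first by case: (x \in B).
by case: (t \in A); case: (t \in B).
Qed.

End Symdiff.

Section Forcing.
Variables (V : finType) (arc : rel V).
Local Notation N := (Nin arc).

Lemma mem_Nin u v : (u \in N v) = arc u v.
Proof. by rewrite inE. Qed.

Lemma exists_forcing_of_dom_forced x : dom_forced arc x -> exists y, forcing arc x y.
Proof.
case/existsP => y /eqP Ny; exists y.
have xy : x \in N y by rewrite Ny set11.
by rewrite /forcing -mem_Nin xy Ny eqxx.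
Qed.

Lemma exists_forcing_of_loc_forced x : loc_forced arc x -> exists y, forcing arc x y.
Proof.
case/existsP => a /existsP[b /andP[_ /eqP ab]].
have : x \in symdiff (N a) (N b) by rewrite ab set11.
rewrite mem_symdiff; case: (boolP (x \in N a)) => [xa _|_].
  exists a; rewrite /forcing -mem_Nin xa; apply/orP; right.
  by apply/existsP; exists b; rewrite (setD1_symdiff ab xa).
rewrite eq_sym eqbF_neg negbK => xb.
exists b; rewrite /forcing -mem_Nin xb; apply/orP; right.
apply/existsP; exists a; apply/eqP/(setD1_symdiff _ xb).
by rewrite /symdiff setUC.
Qed.

Definition Nin_family : {set {set V}} := set0 |: [set N v | v in V].

Lemma card_Nin_family : #|Nin_family| <= #|V|.+1.
Proof. by rewrite cardsU1 -add1n leq_add ?leq_b1 ?leq_imset_card. Qed.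

Lemma forcing_removable x y : forcing arc x y -> removable Nin_family (N y) x.
Proof.
have NF v : N v \in Nin_family by rewrite !inE imset_f ?orbT.
case/andP => xy /orP[/eqP Ny|/existsP[z /eqP Nz]]; rewrite /removable NF mem_Nin xy /=.
  by rewrite Ny setDv setU11.
by rewrite -Nz NF.
Qed.

Lemma Harc_card_lt x y : Harc arc x y -> #|N x| < #|N y|.
Proof. by case/existsP => v /and3P[_ vy /eqP ->]; apply/proper_card/properD1. Qed.

Lemma gamma_OL_le S : is_OLD arc S -> gamma_OL arc <= #|S|.
Proof.
rewrite /gamma_OL => OLD_S; have : S \in index_enum {set V} by rewrite mem_index_enum.
elim: (index_enum _) => //= B r IH; rewrite big_cons in_cons.
case/predU1P => [<-|Sr]; first by rewrite OLD_S geq_minl.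
by case: ifP => _; rewrite ?geq_min IH ?orbT.
Qed.

Lemma loc_forced_setD1 x y z : x \in N y -> N z = N y :\ x -> loc_forced arc x.
Proof.
move=> xy Nz; apply/existsP; exists z; apply/existsP; exists y.
rewrite Nz symdiff_setD1 // eqxx andbT.
by apply: contraTneq xy => zy; move: Nz; rewrite zy => ->; rewrite setD11.
Qed.

Hypothesis loc : locatable arc.

Lemma Nin_neq0 v : N v != set0.
Proof.
have [S /andP[/forallP dom _]] := loc.
by case/existsP: (dom v) => u /andP[_ uv]; apply/set0Pn; exists u.
Qed.

Lemma symdiff_Nin_neq0 u w : u != w -> symdiff (N u) (N w) != set0.
Proof.
have [S /andP[_ /forallP sep]] := loc => uw.
case/existsP: (implyP (forallP (sep u) w) uw) => s /andP[_ suw].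
by apply/set0Pn; exists s; rewrite mem_symdiff.
Qed.

Lemma Nin_inj : injective N.
Proof.
move=> u w Nuw; apply/eqP/negPn/negP => /symdiff_Nin_neq0.
by rewrite Nuw /symdiff setDv setU0 eqxx.
Qed.

Lemma is_OLD_setC1 x : ~~ dom_forced arc x -> ~~ loc_forced arc x -> is_OLD arc [set~ x].
Proof.
move=> /existsPn Nx /existsPn symx; apply/andP; split; apply/forallP => u.
  exact: exists_setC1 (Nin_neq0 u) (Nx u).
apply/forallP => w; apply/implyP => uw.
under eq_existsb => s do rewrite -mem_symdiff.
apply: exists_setC1 (symdiff_Nin_neq0 uw) _.
by have /existsPn := symx u => /(_ w); rewrite uw.
Qed.

Lemma forced_of_gamma_OL x : gamma_OL arc = #|V| -> dom_forced arc x || loc_forced arc x.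
Proof.
move=> gam; apply/negPn/negP => /norP[ndom nloc].
have := gamma_OL_le (is_OLD_setC1 ndom nloc); rewrite gam cardsC1.
by rewrite (cardD1 x) inE ltnn.
Qed.

Hypothesis gam : gamma_OL arc = #|V|.

Lemma exists_forcing_from x : exists y, forcing arc x y.
Proof.
have /orP[] := forced_of_gamma_OL x gam.
  exact: exists_forcing_of_dom_forced.
exact: exists_forcing_of_loc_forced.
Qed.

Lemma forcing_tail_uniq x1 x2 y : forcing arc x1 y -> forcing arc x2 y -> x1 = x2.
Proof.
move=> /forcing_removable r1 /forcing_removable r2.
apply: (removable_uniq (X := [set: V])) r1 r2; first exact: setU11.
  by move=> x _; have [y' xy'] := exists_forcing_from x; exists (N y'); apply: forcing_removable.
by rewrite cardsT card_Nin_family.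
Qed.

Definition fplus x := odflt x [pick y | forcing arc x y].

Lemma forcing_fplus x : forcing arc x (fplus x).
Proof.
rewrite /fplus; case: pickP => [y //|none].
by have [y xy] := exists_forcing_from x; have := none y; rewrite xy.
Qed.

Lemma exists_forcing_to y : exists x, forcing arc x y.
Proof.
have fplus_inj : injective fplus.
  by move=> x1 x2 e; apply: (forcing_tail_uniq (forcing_fplus x1)); rewrite e forcing_fplus.
have [g _ fplusK] := injF_bij fplus_inj.
by exists (g y); rewrite -{2}(fplusK y) forcing_fplus.
Qed.

Lemma forcing_fminus y : forcing arc (fminus arc y) y.
Proof.
rewrite /fminus; case: pickP => [x //|none].
by have [x xy] := exists_forcing_to y; have := none x; rewrite xy.
Qed.

Lemma fminus_forcing x y : forcing arc x y -> fminus arc y = x.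
Proof. exact: forcing_tail_uniq (forcing_fminus y). Qed.

Lemma Harc_fminus x y :
  Harc arc x y -> loc_forced arc (fminus arc y) /\ N x = N y :\ fminus arc y.
Proof.
case/existsP => v /and3P[loc_v vy /eqP Nx].
suff -> : fminus arc y = v by [].
apply: fminus_forcing; rewrite /forcing -mem_Nin vy; apply/orP; right.
by apply/existsP; exists x; rewrite Nx.
Qed.

Lemma Harc_in_uniq a b y : Harc arc a y -> Harc arc b y -> a = b.
Proof. by move=> /Harc_fminus[_ Na] /Harc_fminus[_ Nb]; apply: Nin_inj; rewrite Na Nb. Qed.

Lemma fminus_source r : (forall x, ~~ Harc arc x r) ->
  dom_forced arc (fminus arc r) /\ #|N r| = 1.
Proof.
move=> noin; have /andP[fr /orP[/eqP Nr|/existsP[z /eqP Nz]]] := forcing_fminus r.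
  by split; [apply/existsP; exists r; rewrite Nr | rewrite Nr cards1].
have fNr : fminus arc r \in N r by rewrite mem_Nin.
have hzr : Harc arc z r.
  by apply/existsP; exists (fminus arc r); rewrite (loc_forced_setD1 fNr Nz) fNr Nz eqxx.
by have := noin z; rewrite hzr.
Qed.

End Forcing.

Theorem theorem17 (V : finType) (arc : rel V) :
  locatable arc -> gamma_OL arc = #|V| ->
  forest_of_rooted_trees (Harc arc) /\
  (forall r, rooted_dtree (Harc arc) (wcomp (Harc arc) r) r ->
     dom_forced arc (fminus arc r) /\ #|Nin arc r| = 1) /\
  (forall v, ~ rooted_dtree (Harc arc) (wcomp (Harc arc) v) v ->
     loc_forced arc (fminus arc v) /\ exists u, Harc arc u v).
Proof.
move=> loc gam.
have rank_lt := @Harc_card_lt V arc.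
have in_uniq := Harc_in_uniq loc gam.
have rootedP v := rooted_dtree_wcompP rank_lt in_uniq v.
split; first exact: graded_forest_of_rooted_trees rank_lt in_uniq.
split=> [r /rootedP /forallP src_r | v not_root].
  by apply: (fminus_source loc gam) => x; apply: src_r.
have /forallPn[u /negPn huv] : ~~ source (Harc arc) v by apply/negP => /rootedP.
by split; [case: (Harc_fminus loc gam huv) | exists u].
Qed.
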